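(* Let $\{w_t\}_{t=0}^T$ be generated by the CLion optimizer (defined in the context) for $T$ iterations, and let $\hat G=\max(G,\sqrt d)$. If $\|w_0\|\le\eta\hat G$ and $\lambda\le\frac{1}{2\eta\hat G T^\alpha}$ with $\alpha>1$, then for all $t$, $$\|w_t\|\le(t+1)\eta\hat G,\qquad \|w_t-w_{t-1}\|\le2\eta\hat G.$$
   Context: CLion optimizer with $\eta>0$, $\beta_1,\beta_2\in(0,1)$, $\lambda>0$, $\nu>0$: initialize $w_0\in\mathbb{R}^d$, $m_0=0$; for $t=1,\dots,T$: draw $\xi_t\sim\mathcal{D}$, $g_t=\nabla f(w_{t-1};\xi_t)$, $c_t=\beta_1m_{t-1}+(1-\beta_1)g_t$; with $S_t=\{j:(c_t)_j\ne0\}$, if $\min_{j\in S_t}|(c_t)_j|\ge\nu$ then $w_t=w_{t-1}-\eta(\mathrm{sign}(c_t)+\lambda w_{t-1})$, else $w_t=w_{t-1}-\eta(c_t+\lambda w_{t-1})$; $m_t=\beta_2m_{t-1}+(1-\beta_2)g_t$. Here $\mathrm{sign}$ is coordinatewise with $\mathrm{sign}(0)=0$. $G$ is the constant of the standing assumption that each $f(\cdot;\xi)$ is $G$-Lipschitz: $|f(w_1;\xi)-f(w_2;\xi)|\le G\|w_1-w_2\|$ for all $w_1,w_2,\xi$ (so $\|\nabla f(w;\xi)\|\le G$). $\|\cdot\|$ is the Euclidean norm. *)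

From mathcomp Require Import all_boot all_order all_algebra.
From mathcomp Require Import all_classical all_reals.
From mathcomp Require Import exp.
Set Implicit Arguments. Unset Strict Implicit. Unset Printing Implicit Defensive.
Import Order.TTheory GRing.Theory Num.Theory.
Local Open Scope ring_scope.

Section CLion.
Variables (R : realType) (d : nat).

Definition enorm (x : 'rV[R]_d) : R := Num.sqrt (\sum_(i < d) x ord0 i ^+ 2).

(* coordinatewise sign, with sign 0 = 0 *)
Definition vsign (x : 'rV[R]_d) : 'rV[R]_d := \row_i Num.sg (x ord0 i).

(* min_{j in S_t} |c_j| >= nu, with S_t = {j : c_j <> 0} *)
Definition min_nz_ge (nu : R) (c : 'rV[R]_d) : Prop :=
  forall j : 'I_d, c ord0 j != 0 -> nu <= `|c ord0 j|.

(* One CLion run.  [grad w xi] is the stochastic gradient of f(.;xi) at w,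
   [xi t] is the sample drawn at iteration t (t >= 1).
   [clion_state t] = (w_t, m_t). *)
Fixpoint clion_state (Xi : Type) (grad : 'rV[R]_d -> Xi -> 'rV[R]_d)
  (xi : nat -> Xi) (eta beta1 beta2 lam nu : R) (w0 : 'rV[R]_d) (t : nat)
  : 'rV[R]_d * 'rV[R]_d :=
  match t with
  | 0 => (w0, 0)
  | t'.+1 =>
    let wm := clion_state grad xi eta beta1 beta2 lam nu w0 t' in
    let w := wm.1 in let m := wm.2 in
    let g := grad w (xi t'.+1) in
    let c := beta1 *: m + (1 - beta1) *: g in
    let w' := if `[< min_nz_ge nu c >]
              then w - eta *: (vsign c + lam *: w)
              else w - eta *: (c + lam *: w) in
    (w', beta2 *: m + (1 - beta2) *: g)
  end.

Definition clion_w (Xi : Type) grad (xi : nat -> Xi) eta beta1 beta2 lam nu w0 t :=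
  (@clion_state Xi grad xi eta beta1 beta2 lam nu w0 t).1.

End CLion.

(* Every CLion step has the form w_t = w_{t-1} - eta (u_t + lam w_{t-1}) with
   ||u_t|| <= Ghat: u_t is either sign(c_t), of norm at most sqrt d, or c_t, a
   convex combination of gradients and hence of norm at most G.  The condition
   on lam forces eta lam T <= 1/2 (using Ghat >= 1 and T <= T^alpha), so the
   decay factor 1 - eta lam lies in [0, 1] and the norm of w grows by at most
   eta Ghat per step.  Then ||w_t - w_{t-1}|| = eta ||u_t + lam w_{t-1}||
   <= eta (Ghat + lam t eta Ghat) <= 2 eta Ghat.  When d = 0 all vectors
   vanish. *)

From mathcomp Require Import all_boot all_order all_algebra.
From mathcomp Require Import all_classical all_reals.
From mathcomp Require Import exp.
From mathcomp Require Import ring lra.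
Set Implicit Arguments.
Unset Strict Implicit.
Unset Printing Implicit Defensive.
Import Order.TTheory GRing.Theory Num.Theory.
Local Open Scope ring_scope.

Section EuclideanNorm.
Variables (R : realType) (d : nat).
Implicit Types (x y : 'rV[R]_d) (a : R).

Lemma enorm_ge0 x : 0 <= enorm x.
Proof. exact: sqrtr_ge0. Qed.

Lemma enorm0 : enorm (0 : 'rV[R]_d) = 0.
Proof. by rewrite /enorm big1 ?sqrtr0 // => i _; rewrite mxE expr0n. Qed.

Lemma enorm_dim0 x : d = 0%N -> enorm x = 0.
Proof.
by move=> d0; rewrite /enorm big_pred0 ?sqrtr0 // => -[i]; rewrite d0.
Qed.

Lemma enormZ a x : enorm (a *: x) = `|a| * enorm x.
Proof.
rewrite /enorm -sqrtr_sqr -sqrtrM ?sqr_ge0 // mulr_sumr.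
by congr Num.sqrt; apply: eq_bigr => i _; rewrite mxE exprMn.
Qed.

Lemma cauchy_schwarz x y :
  (\sum_i x ord0 i * y ord0 i) ^+ 2 <=
  (\sum_i x ord0 i ^+ 2) * (\sum_i y ord0 i ^+ 2).
Proof.
set a := x ord0; set b := y ord0.
have lagrange : \sum_i \sum_j (a i * b j - a j * b i) ^+ 2 =
    2 * ((\sum_i a i ^+ 2) * (\sum_i b i ^+ 2) - (\sum_i a i * b i) ^+ 2).
  have expand i j : (a i * b j - a j * b i) ^+ 2 =
      a i ^+ 2 * b j ^+ 2 + a j ^+ 2 * b i ^+ 2 - 2 * (a i * b i * (a j * b j)).
    by ring.
  under eq_bigr => i _ do under eq_bigr => j _ do rewrite expand.
  under eq_bigr => i _ do rewrite sumrB big_split /=.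
  rewrite sumrB big_split /=.
  have sum_ab : \sum_i \sum_j a i ^+ 2 * b j ^+ 2 =
                (\sum_i a i ^+ 2) * (\sum_i b i ^+ 2).
    by rewrite mulr_suml; apply: eq_bigr => i _; rewrite mulr_sumr.
  have sum_cross : \sum_i \sum_j 2 * (a i * b i * (a j * b j)) =
                   2 * (\sum_i a i * b i) ^+ 2.
    rewrite expr2 mulr_suml mulr_sumr; apply: eq_bigr => i _.
    by rewrite !mulr_sumr.
  rewrite sum_ab exchange_big /= sum_ab sum_cross; ring.
rewrite -subr_ge0 -(@pmulr_rge0 _ 2) // -lagrange.
by apply: sumr_ge0 => i _; apply: sumr_ge0 => j _; exact: sqr_ge0.
Qed.

Lemma enormD x y : enorm (x + y) <= enorm x + enorm y.
Proof.
have := cauchy_schwarz x y; rewrite /enorm.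
set A := \sum_i x ord0 i ^+ 2; set B := \sum_i y ord0 i ^+ 2.
set P := \sum_i x ord0 i * y ord0 i => cs.
have A0 : 0 <= A by apply: sumr_ge0 => i _; exact: sqr_ge0.
have B0 : 0 <= B by apply: sumr_ge0 => i _; exact: sqr_ge0.
have sum_xy : \sum_i (x + y) ord0 i ^+ 2 = A + 2 * P + B.
  rewrite /A /B /P mulr_sumr -!big_split /=.
  by apply: eq_bigr => i _; rewrite mxE; ring.
have P_le : P <= Num.sqrt A * Num.sqrt B.
  by rewrite -sqrtrM // (le_trans (ler_norm P)) // -sqrtr_sqr ler_wsqrtr.
rewrite sum_xy -[X in _ <= X]ger0_norm ?addr_ge0 ?sqrtr_ge0 // -sqrtr_sqr.
by rewrite ler_wsqrtr // sqrrD !sqr_sqrtr // -mulr_natl; lra.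
Qed.

Lemma enorm_vsign x : enorm (vsign x) <= Num.sqrt d%:R.
Proof.
rewrite ler_wsqrtr // -[d in d%:R]card_ord -sumr_const.
apply: ler_sum => i _; rewrite mxE.
by case: sgrP; rewrite ?expr0n ?sqrrN ?expr1n.
Qed.

Lemma enorm_convex b x y M : 0 <= b <= 1 -> enorm x <= M -> enorm y <= M ->
  enorm (b *: x + (1 - b) *: y) <= M.
Proof.
move=> /andP[b0 b1] xM yM; apply: le_trans (enormD _ _) _.
rewrite !enormZ ger0_norm // ger0_norm ?subr_ge0 //.
by have := enorm_ge0 x; have := enorm_ge0 y; nra.
Qed.

End EuclideanNorm.

Section CLionStep.
Variables (R : realType) (d : nat) (Xi : Type).
Variables (grad : 'rV[R]_d -> Xi -> 'rV[R]_d) (xi : nat -> Xi).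
Variables (eta beta1 beta2 lam nu : R) (w0 : 'rV[R]_d).

Local Notation state := (clion_state grad xi eta beta1 beta2 lam nu w0).
Local Notation w := (clion_w grad xi eta beta1 beta2 lam nu w0).

Definition clion_dir (t : nat) : 'rV[R]_d :=
  let c := beta1 *: (state t).2 + (1 - beta1) *: grad (state t).1 (xi t.+1) in
  if `[< min_nz_ge nu c >] then vsign c else c.

Lemma clion_wS t : w t.+1 = w t - eta *: (clion_dir t + lam *: w t).
Proof. by rewrite /clion_w /clion_dir /=; case: ifP. Qed.

Variable G : R.
Hypothesis grad_bound : forall v z, enorm (grad v z) <= G.
Hypotheses (beta1_01 : 0 <= beta1 <= 1) (beta2_01 : 0 <= beta2 <= 1).

Lemma enorm_clion_momentum t : enorm (state t).2 <= G.
Proof.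
elim: t => [|t IH] /=; last exact: enorm_convex.
by rewrite enorm0 (le_trans (enorm_ge0 (grad w0 (xi 0%N)))).
Qed.

Lemma enorm_clion_dir t : enorm (clion_dir t) <= Num.max G (Num.sqrt d%:R).
Proof.
rewrite /clion_dir; case: ifP => _; rewrite le_max ?enorm_vsign ?orbT //.
by rewrite enorm_convex ?enorm_clion_momentum.
Qed.

End CLionStep.

Section DecayedSteps.
Variables (R : realType) (d : nat) (w u : nat -> 'rV[R]_d).
Variables (eta lam K : R) (T : nat).
Hypothesis w_succ : forall t, w t.+1 = w t - eta *: (u t + lam *: w t).
Hypothesis u_bound : forall t, enorm (u t) <= K.
Hypotheses (eta_gt0 : 0 < eta) (lam_ge0 : 0 <= lam).
Hypothesis decay_small : eta * lam * T%:R <= 2^-1.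

Lemma decay_le_half_upto t : (t <= T)%N -> eta * lam * t%:R <= 2^-1.
Proof.
move=> tT; apply: le_trans decay_small; rewrite ler_wpM2l ?ler_nat //.
by rewrite mulr_ge0 // ltW.
Qed.

Lemma enorm_decayed_iterate t : enorm (w 0) <= eta * K -> (t <= T)%N ->
  enorm (w t) <= t.+1%:R * eta * K.
Proof.
move=> w0_bound; elim: t => [|t IH] tT; first by rewrite mul1r.
have decay1 := decay_le_half_upto (leq_trans (ltn0Sn t) tT).
have wt := IH (ltnW tT); have ut := u_bound t; have wt0 := enorm_ge0 (w t).
have -> : w t.+1 = (1 - eta * lam) *: w t + (- eta) *: u t.
  by rewrite w_succ; apply/rowP => i; rewrite !mxE; ring.
apply: le_trans (enormD _ _) _.
rewrite !enormZ normrN (gtr0_norm eta_gt0) ger0_norm; last first.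
  by rewrite mulr1 in decay1; lra.
have := ler_wpM2l (ltW eta_gt0) ut.
have : 0 <= eta * lam * enorm (w t) by rewrite !mulr_ge0 // ltW.
rewrite mulrSr; lra.
Qed.

Lemma enorm_decayed_increment t : enorm (w 0) <= eta * K -> (t < T)%N ->
  enorm (w t.+1 - w t) <= 2 * eta * K.
Proof.
move=> w0_bound tT; have ut := u_bound t; have K0 := le_trans (enorm_ge0 _) ut.
have dir_bound : enorm (u t + lam *: w t) <= 2 * K.
  apply: le_trans (enormD _ _) _; rewrite enormZ ger0_norm //.
  have := ler_wpM2l lam_ge0 (enorm_decayed_iterate w0_bound (ltnW tT)).
  have := ler_wpM2r K0 (decay_le_half_upto tT).
  nra.
have -> : w t.+1 - w t = (- eta) *: (u t + lam *: w t).
  by rewrite w_succ; apply/rowP => i; rewrite !mxE; ring.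
rewrite enormZ normrN gtr0_norm //.
have := ler_wpM2l (ltW eta_gt0) dir_bound; lra.
Qed.

End DecayedSteps.

Lemma decay_le_half (R : realType) (eta lam K alpha : R) (T : nat) :
  0 < eta -> 0 <= lam -> 1 <= K -> 1 <= alpha ->
  lam <= (2 * eta * K * T%:R `^ alpha)^-1 -> eta * lam * T%:R <= 2^-1.
Proof.
move=> eta_gt0 lam_ge0 K1 alpha1.
have [->|T_gt0] := posnP T; first by rewrite mulr0 invr_ge0 ler0n.
have T1 : 1 <= (T%:R : R) by rewrite ler1n.
have T_le := le1r_powR T1 alpha1; set P := T%:R `^ alpha in T_le *.
have elam0 : 0 <= eta * lam by rewrite mulr_ge0 // ltW.
have c_gt0 : 0 < 2 * eta * K * P.
  by rewrite !mulr_gt0 // (lt_le_trans ltr01) // (le_trans T1).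
rewrite -div1r ler_pdivlMr // => lam_le.
have := ler_wpM2l elam0 T_le.
have := ler_peMr (mulr_ge0 elam0 (le_trans ler01 (le_trans T1 T_le))) K1.
lra.
Qed.

Theorem lemma3 (R : realType) (d : nat) (Xi : Type)
  (grad : 'rV[R]_d -> Xi -> 'rV[R]_d) (xi : nat -> Xi)
  (G eta beta1 beta2 lam nu alpha : R) (T : nat) (w0 : 'rV[R]_d) :
  (forall (w : 'rV[R]_d) (z : Xi), enorm (grad w z) <= G) ->
  0 < eta -> 0 < beta1 < 1 -> 0 < beta2 < 1 -> 0 < lam -> 0 < nu ->
  1 < alpha ->
  let Ghat := Num.max G (Num.sqrt d%:R) in
  enorm w0 <= eta * Ghat ->
  lam <= (2 * eta * Ghat * (T%:R `^ alpha))^-1 ->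
  forall t : nat, (t <= T)%N ->
    enorm (clion_w grad xi eta beta1 beta2 lam nu w0 t) <= t.+1%:R * eta * Ghat /\
    ((1 <= t)%N ->
     enorm (clion_w grad xi eta beta1 beta2 lam nu w0 t
            - clion_w grad xi eta beta1 beta2 lam nu w0 t.-1) <= 2 * eta * Ghat).
Proof.
move=> grad_bound eta_gt0 beta1_01 beta2_01 lam_gt0 _ alpha_gt1.
move=> Ghat w0_bound lam_le t tT; have [d0|d_gt0] := posnP d.
  have Ghat0 : 0 <= Ghat by rewrite le_max sqrtr_ge0 orbT.
  by rewrite !enorm_dim0 //; split=> [|_]; rewrite !mulr_ge0 // ltW.
have Ghat1 : 1 <= Ghat.
  by rewrite le_max -[X in X <= Num.sqrt _]sqrtr1 ler_wsqrtr ?orbT // ler1n.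
have closed01 (b : R) : 0 < b < 1 -> 0 <= b <= 1 by case/andP=> *; rewrite !ltW.
have w_succ := clion_wS grad xi eta beta1 beta2 lam nu w0.
have dir_bound := enorm_clion_dir xi eta lam nu w0 grad_bound
  (closed01 _ beta1_01) (closed01 _ beta2_01).
have lam_ge0 := ltW lam_gt0.
have decay := decay_le_half eta_gt0 lam_ge0 Ghat1 (ltW alpha_gt1) lam_le.
split.
  exact: (enorm_decayed_iterate w_succ dir_bound eta_gt0 lam_ge0 decay).
case: t tT => // t tT _.
exact: (enorm_decayed_increment w_succ dir_bound eta_gt0 lam_ge0 decay).
Qed.
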